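(* Let $n$ be a positive integer and let $X,Y$ be two i.i.d. random vectors taking values in $[0,1]^n$. For every $\epsilon\in(0,1]$, $$\mathbb P\Big[\max_{i}|X_i-Y_i|\ge\epsilon\Big]\le1-\Big(\frac{\epsilon}{2}\Big)^n.$$ *)

From HB Require Import structures.
From mathcomp Require Import all_boot all_order all_algebra.
From mathcomp Require Import all_classical all_reals all_analysis.
Set Implicit Arguments. Unset Strict Implicit. Unset Printing Implicit Defensive.
Import Order.TTheory GRing.Theory Num.Theory.
Local Open Scope classical_set_scope.
Local Open Scope ring_scope.

Definition indep2 (d : measure_display) (T : measurableType d) (R : realType)
  (P : probability T R) (d1 d2 : measure_display)
  (T1 : measurableType d1) (T2 : measurableType d2)
  (X : T -> T1) (Y : T -> T2) : Prop :=
  forall (A : set T1) (B : set T2), measurable A -> measurable B ->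
    P (X @^-1` A `&` Y @^-1` B) = (P (X @^-1` A) * P (Y @^-1` B))%E.

Definition same_law (d : measure_display) (T : measurableType d) (R : realType)
  (P : probability T R) (d1 : measure_display) (T1 : measurableType d1)
  (X Y : T -> T1) : Prop :=
  forall A : set T1, measurable A -> P (X @^-1` A) = P (Y @^-1` A).

(* Cut [0,1]^n into k^n boxes of side 1/k with k = floor(2/eps), so that
   eps/2 <= 1/k < eps.  Two points of a common box are at sup-distance at most
   1/k < eps.  As X and Y are independent with the same law, they fall into a
   common box B with probability sum_B P(X \in B)^2, which by Cauchy-Schwarz
   is at least 1/k^n >= (eps/2)^n. *)

From HB Require Import structures.
From mathcomp Require Import all_boot all_order all_algebra.
From mathcomp Require Import all_classical all_reals all_analysis.
From mathcomp Require Import ring lra.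
Set Implicit Arguments. Unset Strict Implicit. Unset Printing Implicit Defensive.
Import Order.TTheory GRing.Theory Num.Theory.
Local Open Scope classical_set_scope.
Local Open Scope ring_scope.

Lemma sumr_sqr_ge_inv_card (R : realFieldType) (I : finType) (p : I -> R) :
  \sum_i p i = 1 -> #|I|%:R^-1 <= \sum_i p i ^+ 2.
Proof.
move=> p1; set N : R := #|I|%:R.
have NinvE : N * N^-1 ^+ 2 = N^-1.
  have [->|N0] := eqVneq N 0; first by rewrite invr0 mul0r.
  by rewrite expr2 mulrA divff ?mul1r.
have : 0 <= \sum_i (p i - N^-1) ^+ 2 by apply: sumr_ge0 => i _; exact: sqr_ge0.
rewrite (eq_bigr (fun i => p i ^+ 2 - 2 * N^-1 * p i + N^-1 ^+ 2)); last first.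
  by move=> i _; rewrite sqrrB; ring.
rewrite big_split sumrB /= -mulr_sumr p1 sumr_const -[_ *+ #|_|]mulr_natl.
by rewrite -/N NinvE; lra.
Qed.

Lemma exists_inv_nat_between (R : archiRealFieldType) (eps : R) :
  0 < eps -> eps <= 1 -> exists2 k : nat, (0 < k)%N & eps / 2 <= k%:R^-1 < eps.
Proof.
move=> eps_gt0 eps_le1; have eps2_ge0 : 0 <= 2 / eps by rewrite divr_ge0 ?ltW.
have /andP[k_le k_gt] := truncn_itv eps2_ge0; set k := Num.truncn _ in k_le k_gt *.
have k_gt0 : (0 < k)%N by rewrite /k truncn_ge_nat // ler_pdivlMr // mul1r; lra.
exists k => //; have kR_gt0 : (0 : R) < k%:R by rewrite ltr0n.
rewrite -[k%:R^-1]mul1r ler_pdivlMr // ltr_pdivrMr //.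
move: k_le k_gt; rewrite ler_pdivlMr // ltr_pdivrMr // -[k.+1%:R]natr1 => k_le k_gt.
by apply/andP; split; nra.
Qed.

Lemma measure_bigcupT_fin d (T : ringOfSetsType d) (R : realFieldType)
    (mu : {content set T -> \bar R}) (I : finType) (F : I -> set T) :
  (forall i, measurable (F i)) -> trivIset setT F ->
  mu (\bigcup_i F i) = (\sum_i mu (F i))%E.
Proof.
move=> mF tF; rewrite measure_fin_bigcup //; last exact: finite_finset.
rewrite (fsbigE (index_enum I)) ?index_enum_uniq //; last first.
  by move=> i _; rewrite mem_index_enum.
by apply: eq_bigl => i; rewrite in_setT.
Qed.

Lemma measurable_fun_bigmaxr (R : realType) d (T : measurableType d)
    (D : set T) (I : Type) (s : seq I) (f : I -> T -> R) :
  (forall i, measurable_fun D (f i)) ->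
  measurable_fun D (fun t => \big[Num.max/0]_(i <- s) f i t).
Proof.
move=> mf; elim: s => [|i s IH].
  by under eq_fun do rewrite big_nil; exact: measurable_cst.
by under eq_fun do rewrite big_cons; exact: measurable_realfun.measurable_maxr.
Qed.

Lemma measurable_max_dist_ge (R : realType) d (T : measurableType d) n
    (X Y : T -> n.-tuple R) (eps : R) :
  measurable_fun setT X -> measurable_fun setT Y ->
  measurable [set t | eps <= \big[Num.max/0]_(i < n) `|tnth (X t) i - tnth (Y t) i|].
Proof.
move=> mX mY; rewrite -[X in measurable X]setTI -preimage_itvcy.
apply: measurable_fun_bigmaxr => [i||]; [|exact: measurableT|exact: measurable_itv].
apply: measurableT_comp => //; apply: measurable_realfun.measurable_funB.
  exact: measurableT_comp (measurable_tnth i) mX.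
exact: measurableT_comp (measurable_tnth i) mY.
Qed.

Lemma le_probability_setC d (T : measurableType d) (R : realType)
    (P : probability T R) (A B : set T) :
  measurable A -> measurable B -> A `<=` ~` B -> (P A <= 1 - P B)%E.
Proof.
move=> mA mB AB; rewrite -probability_setC //.
by apply: le_measure AB; rewrite inE //; exact: measurableC.
Qed.

Section grid.
Variables (R : realType) (k : nat).
Hypothesis k_gt0 : (0 < k)%N.

Let kR_gt0 : (0 : R) < k%:R. Proof. by rewrite ltr0n. Qed.

Definition unit_cell (j : 'I_k) : set R :=
  if j.+1 == k then [set` `[j%:R / k%:R, 1]]
  else [set` `[j%:R / k%:R, j.+1%:R / k%:R[].

Lemma unit_cell_measurable j : measurable (unit_cell j).
Proof. by rewrite /unit_cell; case: ifP => _; exact: measurable_itv. Qed.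

Lemma unit_cell_bounds j x :
  unit_cell j x -> j%:R / k%:R <= x <= j.+1%:R / k%:R.
Proof.
rewrite /unit_cell; case: ifP => /eqP jk /=; rewrite in_itv /= => /andP[-> x_le] //=.
  by rewrite jk divff ?gt_eqF.
exact: ltW.
Qed.

Lemma unit_cell_dist j x y : unit_cell j x -> unit_cell j y -> `|x - y| <= k%:R^-1.
Proof.
have jE : j.+1%:R / k%:R = j%:R / k%:R + k%:R^-1 :> R by rewrite -natr1 mulrDl mul1r.
move=> /unit_cell_bounds + /unit_cell_bounds; rewrite jE => /andP[? ?] /andP[? ?].
by rewrite ler_norml; apply/andP; split; lra.
Qed.

Lemma trivIset_unit_cell : trivIset setT unit_cell.
Proof.
suff cell_le i j x : unit_cell i x -> unit_cell j x -> (i <= j)%N.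
  move=> i j _ _ [x [xi xj]]; apply/val_inj/eqP.
  by rewrite eqn_leq (cell_le _ _ _ xi xj) (cell_le _ _ _ xj xi).
move=> xi xj; rewrite leqNgt; apply/negP => ji.
have j1_lt : (j.+1 < k)%N by exact: leq_ltn_trans ji (ltn_ord i).
have : x < j.+1%:R / k%:R.
  by move: xj; rewrite /unit_cell ltn_eqF //= in_itv /= => /andP[].
have : j.+1%:R / k%:R <= i%:R / k%:R :> R by rewrite ler_pM2r ?invr_gt0 // ler_nat.
by case/andP: (unit_cell_bounds xi) => *; lra.
Qed.

Lemma unit_cell_index_subproof (x : R) : (minn (Num.truncn (k%:R * x)) k.-1 < k)%N.
Proof. by rewrite gtn_min prednK // leqnn orbT. Qed.

Definition unit_cell_index (x : R) : 'I_k := Ordinal (unit_cell_index_subproof x).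

Lemma mem_unit_cell x : 0 <= x <= 1 -> unit_cell (unit_cell_index x) x.
Proof.
case/andP => x_ge0 x_le1; have kx_ge0 : 0 <= k%:R * x by rewrite mulr_ge0.
have /andP[c_le c_gt] := truncn_itv kx_ge0.
rewrite /unit_cell /=; set c := Num.truncn _ in c_le c_gt *.
have [kc|ck] := leqP k.-1 c.
  rewrite prednK // eqxx /= in_itv /= x_le1 andbT ler_pdivrMr // mulrC.
  by apply: le_trans c_le; rewrite ler_nat.
have -> : (c.+1 == k) = false by apply/negbTE; rewrite -(prednK k_gt0) eqSS ltn_eqF.
by rewrite /= in_itv /= ler_pdivrMr // ltr_pdivlMr // ![x * _]mulrC c_le.
Qed.

Variable n : nat.

Definition grid_box (f : {ffun 'I_n -> 'I_k}) : set (n.-tuple R) :=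
  \bigcap_i ((fun v => tnth v i) @^-1` unit_cell (f i)).

Lemma grid_box_measurable f : measurable (grid_box f).
Proof.
apply: fin_bigcap_measurable => [|i _]; first exact: finite_finset.
by rewrite -[_ @^-1` _]setTI; apply: measurable_tnth => //; exact: unit_cell_measurable.
Qed.

Lemma grid_box_dist f v w : grid_box f v -> grid_box f w ->
  \big[Num.max/0]_i `|tnth v i - tnth w i| <= k%:R^-1.
Proof.
move=> fv fw; apply: bigmax_le => [|i _]; first by rewrite invr_ge0 ltW.
exact: unit_cell_dist (fv i I) (fw i I).
Qed.

Lemma trivIset_grid_box : trivIset setT grid_box.
Proof.
move=> f g _ _ [v [fv gv]]; apply/ffunP => i.
by apply: trivIset_unit_cell => //; exists (tnth v i); split; [exact: fv | exact: gv].
Qed.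

Lemma grid_box_cover v : (forall i, 0 <= tnth v i <= 1) -> exists f, grid_box f v.
Proof.
move=> v01; exists [ffun i => unit_cell_index (tnth v i)] => i _ /=.
by rewrite ffunE; exact: mem_unit_cell.
Qed.

End grid.

Section collision.
Context (R : realType) d (T : measurableType d) (P : probability T R).
Context d' (V : measurableType d') (X Y : T -> V).
Hypotheses (mX : measurable_fun setT X) (mY : measurable_fun setT Y).
Hypotheses (XY_indep : indep2 P X Y) (XY_law : same_law P X Y).
Context (I : finType) (C : I -> set V).
Hypotheses (mC : forall i, measurable (C i)) (tC : trivIset setT C).
Hypothesis C_cover : forall t, exists i, C i (X t).

Lemma measurable_same_block :
  measurable (\bigcup_i (X @^-1` C i `&` Y @^-1` C i)).
Proof.
apply: fin_bigcup_measurable => [|i _]; first exact: finite_finset.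
by apply: measurableI; rewrite -[_ @^-1` _]setTI; [exact: mX | exact: mY].
Qed.

Lemma prob_same_block_ge_inv_card :
  ((#|I|%:R^-1)%:E <= P (\bigcup_i (X @^-1` C i `&` Y @^-1` C i)))%E.
Proof.
have mXC i : measurable (X @^-1` C i) by rewrite -[_ @^-1` _]setTI; exact: mX.
have mYC i : measurable (Y @^-1` C i) by rewrite -[_ @^-1` _]setTI; exact: mY.
have tXC : trivIset setT (fun i => X @^-1` C i).
  by move=> i j _ _ [t [? ?]]; apply: tC => //; exists (X t).
pose p i := fine (P (X @^-1` C i)).
have pE i : P (X @^-1` C i) = (p i)%:E by rewrite fineK ?fin_num_measure.
have p_sum1 : \sum_i p i = 1.
  apply: EFin_inj; rewrite -sumEFin -(probability_setT P).
  have <- : \bigcup_i X @^-1` C i = setT.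
    by apply/seteqP; split => // t _; have [i Ci] := C_cover t; exists i.
  by rewrite measure_bigcupT_fin //; apply: eq_bigr => i _; exact/esym/pE.
have PXY i : P (X @^-1` C i `&` Y @^-1` C i) = (p i ^+ 2)%:E.
  by rewrite XY_indep // -XY_law // pE -EFinM expr2.
rewrite measure_bigcupT_fin; last 2 first.
- by move=> i; exact: measurableI.
- by move=> i j _ _ [t [[? _] [? _]]]; apply: tXC => //; exists t.
rewrite (eq_bigr (fun i => (p i ^+ 2)%:E)) => [|i _]; last exact: PXY.
by rewrite sumEFin lee_fin; exact: sumr_sqr_ge_inv_card.
Qed.

End collision.

Theorem lemma9 (R : realType) (d : measure_display) (T : measurableType d)
  (P : probability T R) (n : nat) (hn : (0 < n)%N)
  (X Y : T -> n.-tuple R)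
  (mX : measurable_fun setT X) (mY : measurable_fun setT Y)
  (hXY : indep2 P X Y) (hlaw : same_law P X Y)
  (hX01 : forall t (i : 'I_n), 0 <= tnth (X t) i <= 1)
  (hY01 : forall t (i : 'I_n), 0 <= tnth (Y t) i <= 1)
  (eps : R) (heps0 : 0 < eps) (heps1 : eps <= 1) :
  (P [set t | (eps <= \big[Num.max/0]_(i < n) `|tnth (X t) i - tnth (Y t) i|)%R ]
    <= (1 - (eps / 2) ^+ n)%:E)%E.
Proof.
have [k k_gt0 /andP[eps_le k_lt]] := exists_inv_nat_between heps0 heps1.
pose grid := {ffun 'I_n -> 'I_k}.
have cover t : exists f : grid, grid_box f (X t) by exact: grid_box_cover.
set E := [set t | _].
pose S := \bigcup_(f in [set: grid]) (X @^-1` grid_box f `&` Y @^-1` grid_box f).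
have S_ge : (((k ^ n)%:R^-1)%:E <= P S)%E.
  have := prob_same_block_ge_inv_card mX mY hXY hlaw (@grid_box_measurable R k n)
    (@trivIset_grid_box R k k_gt0 n) cover.
  by rewrite card_ffun !card_ord.
have ES : E `<=` ~` S.
  move=> t Et [f _ [Xf Yf]]; have := grid_box_dist k_gt0 Xf Yf.
  by rewrite leNgt (lt_le_trans k_lt Et).
have mS : measurable S := measurable_same_block mX mY (@grid_box_measurable R k n).
apply: le_trans (le_probability_setC P (measurable_max_dist_ge eps mX mY) mS ES) _.
rewrite EFinB leeB //; apply: le_trans S_ge; rewrite lee_fin natrX -exprVn.
by rewrite lerXn2r // nnegrE ?invr_ge0 // divr_ge0 // ltW.
Qed.
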